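(* Let $(P_n)_n$ be a sequence of pairwise distinct polynomials in $\mathbb{Z}[X_1,\dots,X_m]$ such that $\sup_n \deg P_n<\infty$. Then there exist complex numbers $\xi_1,\dots,\xi_m$, algebraically independent (over $\mathbb{Q}$), such that the sequence $(|P_n(\xi_1,\dots,\xi_m)|)_n$ is unbounded.
   Context: $\deg$ denotes total degree. *)

From HB Require Import structures.
From mathcomp Require Import all_boot all_order all_algebra.
From mathcomp Require Import mpoly.
From mathcomp Require Import complex.
From mathcomp Require Import Rstruct.
From Stdlib Require Import Rdefinitions.
Set Implicit Arguments. Unset Strict Implicit. Unset Printing Implicit Defensive.
Import Order.TTheory GRing.Theory Num.Theory.
Local Open Scope ring_scope.

Definition C : Type := complex Rdefinitions.R.

Definition evalZ (m : nat) (P : {mpoly int[m]}) (xi : 'I_m -> C) : C :=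
  (map_mpoly (intr : int -> C) P).@[xi].

Definition alg_indep_Q (m : nat) (xi : 'I_m -> C) : Prop :=
  forall p : {mpoly rat[m]}, p != 0 -> (map_mpoly (ratr : rat -> C) p).@[xi] != 0.

From HB Require Import structures.
From mathcomp Require Import all_boot all_order all_algebra.
From mathcomp Require Import mpoly complex Rstruct.
From mathcomp Require Import classical_sets reals.
From mathcomp Require Import lra zify.
From Stdlib Require Import Rdefinitions Classical.
Set Implicit Arguments. Unset Strict Implicit. Unset Printing Implicit Defensive.
Import Order.TTheory GRing.Theory Num.Theory.
Local Open Scope ring_scope.

(* Index the monomials of degree < d by 'I_N, so that P_n(xi) is the value of
   the linear form c_n (coefficients of P_n) at the vector of monomials of xi.
   The vectors v with sup_n |c_n v| < oo form a subspace W of C^N, and W is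
   proper: otherwise all coefficients of the P_n would be bounded, leaving
   only finitely many possible P_n.  A nonzero linear form vanishing on W is
   a nonzero polynomial F with F(xi) = 0 whenever the monomial vector of xi
   lies in W.  Since C is uncountable, some xi avoids the zero sets of F and
   of the countably many nonzero rational polynomials; such an xi is
   algebraically independent and makes (P_n(xi)) unbounded. *)

Section RealsAvoidSequences.
Variables (R : realType) (u : nat -> R).

Definition trisect (ab : R * R) (k : nat) : R * R :=
  let: (a, b) := ab in
  let a' := a + (b - a) / 3%:R in let b' := b - (b - a) / 3%:R in
  if u k <= a' then (b', b) else (a, a').

Fixpoint cantor_interval (k : nat) : R * R :=
  if k is k'.+1 then trisect (cantor_interval k') k' else (0, 1).

Local Notation I := cantor_interval.

Definition subinterval (J J' : R * R) := (J'.1 <= J.1) && (J.2 <= J'.2).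

Lemma trisect_spec (ab : R * R) k : ab.1 < ab.2 ->
  let ab' := trisect ab k in
  [/\ ab'.1 < ab'.2, subinterval ab' ab & (u k < ab'.1) || (ab'.2 < u k)].
Proof.
case: ab => a b /= ab; rewrite /trisect /subinterval.
case: (leP (u k) (a + (b - a) / 3%:R)) => uk /=;
  (split; [lra | apply/andP; split; lra | apply/orP]).
- by left; lra.
- by right; lra.
Qed.

Lemma cantor_interval_step k :
  [/\ (I k).1 < (I k).2, subinterval (I k.+1) (I k)
    & (u k < (I k.+1).1) || ((I k.+1).2 < u k)].
Proof.
have lt_I j : (I j).1 < (I j).2.
  by elim: j => [|j IH] /=; [exact: ltr01 | have [] := trisect_spec j IH].
by have [] := trisect_spec k (lt_I k).
Qed.

Lemma cantor_interval_nested (k l : nat) : (k <= l)%nat -> subinterval (I l) (I k).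
Proof.
apply: (@homo_leq _ I (fun A B => subinterval B A)) => [A|B A C|n].
- by rewrite /subinterval !lexx.
- move=> /andP[AB1 AB2] /andP[BC1 BC2]; apply/andP; split.
  + exact: le_trans AB1 BC1.
  + exact: le_trans BC2 AB2.
- by case: (cantor_interval_step n).
Qed.

Lemma cantor_interval_le (k l : nat) : (I k).1 <= (I l).2.
Proof.
have /andP[lek _] := cantor_interval_nested (leq_maxl k l).
have /andP[_ lel] := cantor_interval_nested (leq_maxr k l).
have [lt _ _] := cantor_interval_step (maxn k l).
by apply: le_trans lek _; apply: le_trans lel; apply: ltW.
Qed.

Lemma real_avoids_sequence : exists x : R, forall n, x != u n.
Proof.
pose E := range (fun k => (I k).1).
have supE : has_sup E.
  by split; [exists (I 0).1, 0%nat | exists (I 0).2 => _ [k _ <-]; apply: cantor_interval_le].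
have left_le k : (I k).1 <= sup E by apply: (ub_le_sup supE.2); exists k.
have le_right k : sup E <= (I k).2.
  by apply: ge_sup supE.1 _ => _ [l _ <-]; apply: cantor_interval_le.
exists (sup E) => n; apply/eqP => xu.
have [_ _ /orP[]] := cantor_interval_step n; rewrite -xu => lt.
- by have := left_le n.+1; rewrite leNgt lt.
- by have := le_right n.+1; rewrite leNgt lt.
Qed.

End RealsAvoidSequences.

Lemma complex_avoids_sequence (R : realType) (u : nat -> R[i]) :
  exists z : R[i], forall n, z != u n.
Proof.
have [x xu] := real_avoids_sequence (fun n => complex.Re (u n)).
by exists (x%:C)%C => n; apply: contra_neq (xu n) => <-.
Qed.

Definition extend_last (T : Type) n (x : 'I_n -> T) (t : T) (i : 'I_n.+1) : T :=
  if unlift ord_max i is Some j then x j else t.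

Lemma extend_last_widen (T : Type) n (x : 'I_n -> T) t i :
  extend_last x t (widen_ord (leqnSn n) i) = x i.
Proof.
have -> : widen_ord (leqnSn n) i = lift ord_max i by apply: ord_inj; rewrite lift_max.
by rewrite /extend_last liftK.
Qed.

Lemma extend_last_max (T : Type) n (x : 'I_n -> T) t : extend_last x t ord_max = t.
Proof. by rewrite /extend_last unlift_none. Qed.

Section MultiToUni.
Variables (R : nzRingType) (n : nat).

Definition mnm_init (m : 'X_{1..n.+1}) : 'X_{1..n} :=
  [multinom m (widen_ord (leqnSn n) i) | i < n].

Lemma mnm_init_last_eq (m m' : 'X_{1..n.+1}) :
  (mnm_init m == mnm_init m') && (m ord_max == m' ord_max) = (m == m').
Proof.
apply/idP/eqP => [/andP[/eqP e /eqP e_max]|-> //]; last by rewrite !eqxx.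
apply/mnmP => i; case: (unliftP ord_max i) => [j ->|-> //].
have := congr1 (fun mu : 'X_{1..n} => mu j) e; rewrite !mnmE.
by have -> : lift ord_max j = widen_ord (leqnSn n) j by apply: ord_inj; rewrite lift_max.
Qed.

Lemma mcoeff_muni (p : {mpoly R[n.+1]}) (m : 'X_{1..n.+1}) :
  ((muni p)`_(m ord_max))@_(mnm_init m) = p@_m.
Proof.
rewrite muniE [in RHS](mpolyE p) coef_sum !raddf_sum /=; apply: eq_bigr => m' _.
rewrite coefZ coefXn mcoeffZ mcoeffX -mnm_init_last_eq -/(mnm_init m').
rewrite mulr_natr mcoeffMn mcoeffZ mcoeffX [m ord_max == _]eq_sym.
by case: (_ == _); case: (_ == _); rewrite ?mulr0 ?mulr1.
Qed.

Lemma muni_inj : injective (@muni n R).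
Proof.
move=> p q e; apply/mpolyP => m.
by rewrite -mcoeff_muni e mcoeff_muni.
Qed.

End MultiToUni.

Lemma horner_map_muni (R : comNzRingType) n (p : {mpoly R[n.+1]}) x t :
  (map_poly (meval x) (muni p)).[t] = p.@[extend_last x t].
Proof.
rewrite muniE mevalE raddf_sum horner_sum; apply: eq_bigr => m _.
rewrite /= map_polyZ map_polyXn hornerZ hornerXn /= mevalZ mevalX.
rewrite big_ord_recr /= extend_last_max mulrA; congr (_ * _ * _).
by apply: eq_bigr => i _; rewrite mnmE extend_last_widen.
Qed.

Section AvoidZeros.
Variable K : decFieldType.
Hypothesis K_avoids : forall u : nat -> K, exists x, forall n, x != u n.

Lemma poly_avoid_roots (I : countType) (p : I -> {poly K}) :
  exists x, forall i, p i != 0 -> ~~ root (p i) x.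
Proof.
pose s i := projT1 (dec_factor_theorem (p i)).
have s_roots i x : p i != 0 -> root (p i) x -> x \in s i.
  rewrite /s; case: dec_factor_theorem => /= r [q [-> q_roots]].
  rewrite mulf_eq0 negb_or rootM root_prod_XsubC => /andP[q0 _].
  by rewrite (negbTE (q_roots q0 x)).
pose u k := if @pickle_inv (I * nat)%type k is Some ij then nth 0 (s ij.1) ij.2 else 0.
have [x xu] := K_avoids u.
exists x => i pi0; apply: contra (xu (pickle (i, index x (s i)))) => /(s_roots _ _ pi0) xs.
by rewrite /u pickleK_inv /= nth_index.
Qed.

Lemma mpoly_avoid_zeros n (I : countType) (f : I -> {mpoly K[n]}) :
  exists x : 'I_n -> K, forall i, f i != 0 -> (f i).@[x] != 0.
Proof.
elim: n I f => [|n IH] I f.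
  by exists (fun _ => 0) => i; rewrite [f i]nvar0_mpolyC mevalC mpolyC_eq0.
have [x x_avoids] := IH _ (fun ij : I * nat => (muni (f ij.1))`_ij.2).
pose G i := map_poly (meval x) (muni (f i)).
have G_neq0 i : f i != 0 -> G i != 0.
  move=> fi0; have : lead_coef (muni (f i)) != 0.
    by rewrite lead_coef_eq0 raddf_eq0 //; apply: muni_inj.
  move=> /(x_avoids (i, _)); rewrite /= -coef_map.
  by apply: contraNneq => Gi0; rewrite -/(G i) Gi0 coef0.
have [t t_avoids] := poly_avoid_roots G.
exists (extend_last x t) => i fi0.
by rewrite -horner_map_muni; apply: t_avoids; exact: G_neq0.
Qed.

End AvoidZeros.

Section Subspaces.
Variables (F : fieldType) (n : nat) (W : 'rV[F]_n -> Prop).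
Hypotheses (W0 : W 0) (W_lin : forall a u v, W u -> W v -> W (a *: u + v)).

Lemma addsmx_in_subspace (A : 'M_n) w :
  (forall v, (v <= A)%MS -> W v) -> W w -> forall v, (v <= A + w)%MS -> W v.
Proof.
move=> AW Ww v /sub_addsmxP[[a b] /= ->].
rewrite addrC [b]mx11_scalar mul_scalar_mx; apply: W_lin => //.
by apply: AW; apply: submxMl.
Qed.

Lemma subspace_row_space : exists A : 'M_n, forall v, W v <-> (v <= A)%MS.
Proof.
suff: forall k (A : 'M_n), (n - \rank A <= k)%nat ->
    (forall v, (v <= A)%MS -> W v) -> exists B : 'M_n, forall v, W v <-> (v <= B)%MS.
  by move/(_ n 0); apply=> [|v]; [apply: leq_subr | rewrite submx0 => /eqP ->].
elim=> [|k IH] A rkA AW.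
  exists A => v; split=> [_|/AW //].
  by apply: submx_full; rewrite /row_full eqn_leq rank_leq_col; lia.
have [[w [Ww wA]]|A_spans] := classic (exists w, W w /\ ~~ (w <= A)%MS); last first.
  by exists A => v; split=> [Wv|/AW //]; apply: contra_notT A_spans => vA; exists v.
apply: IH (addsmx_in_subspace AW Ww).
have : (\rank A < \rank (A + w)%MS)%nat.
  apply: rank_ltmx; rewrite ltmxE addsmxSl /=.
  by apply: contra wA => /(submx_trans (addsmxSr A w)).
lia.
Qed.

Lemma proper_subspace_annihilator (v0 : 'rV_n) : ~ W v0 ->
  exists2 r : 'cV[F]_n, r != 0 & forall v, W v -> v *m r = 0.
Proof.
move=> Wv0; have [A WA] := subspace_row_space.
have : v0 *m cokermx A != 0 by rewrite -submxE; apply/negP => /WA.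
rewrite matrix_eq0 => /forallPn[i /forallPn[j v0j]].
have mulmx_col (u : 'rV_n) : u *m col j (cokermx A) = col j (u *m cokermx A).
  by rewrite !colE mulmxA.
exists (col j (cokermx A)).
  apply: contraNneq v0j => r0; rewrite ord1.
  have := congr1 (fun c : 'cV_1 => c 0 0) (mulmx_col v0).
  by rewrite r0 mulmx0 /= [col _ _ _ _]mxE mxE => <-.
by move=> v /WA /submxP[a ->]; rewrite mulmx_col -mulmxA mulmx_coker mulmx0 col0.
Qed.

End Subspaces.

Section BoundedFunctionals.
Variables (K : numFieldType) (n : nat) (c : nat -> 'cV[K]_n).

Definition bounded_along (v : 'rV[K]_n) : Prop :=
  exists B : K, forall k, `|(v *m c k) 0 0| <= B.

Lemma bounded_along0 : bounded_along 0.
Proof. by exists 0 => k; rewrite mul0mx mxE normr0. Qed.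

Lemma bounded_alongZD a u v :
  bounded_along u -> bounded_along v -> bounded_along (a *: u + v).
Proof.
move=> [Bu Bu_bound] [Bv Bv_bound]; exists (`|a| * Bu + Bv) => k.
rewrite mulmxDl -scalemxAl [X in `|X|]mxE [X in `|X + _|]mxE.
apply: le_trans (ler_normD _ _) _.
by rewrite normrM lerD ?ler_wpM2l.
Qed.

End BoundedFunctionals.

Lemma nat_not_injective_finType (T : finType) (f : nat -> T) : ~ injective f.
Proof.
move=> f_inj; have /leq_card : injective (fun i : 'I_#|T|.+1 => f i).
  by move=> i j /f_inj /val_inj.
by rewrite card_ord ltnn.
Qed.

Lemma bounded_mpoly_seq_not_injective m d (P : nat -> {mpoly int[m]}) :
  (forall n, (msize (P n) <= d)%nat) ->
  (forall t : 'X_{1..m < d}, exists b, forall n, (absz (P n)@_t <= b)%nat) ->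
  ~ injective P.
Proof.
move=> P_deg /fin_all_exists[bt P_bt] P_inj.
pose b := (\max_t bt t)%nat.
have P_b n (t : 'X_{1..m < d}) : (absz (P n)@_t <= b)%nat.
  exact: leq_trans (P_bt t n) (leq_bigmax t).
(* Shifting by b makes absz injective on the coefficients, all in [-b, b]. *)
pose code n : {ffun 'X_{1..m < d} -> 'I_(b.*2.+1)} :=
  [ffun t : 'X_{1..m < d} => inord (absz ((P n)@_t + b%:Z))].
apply: (@nat_not_injective_finType _ code) => n1 n2 /ffunP code12; apply: P_inj.
apply/mpolyP => mm; have [mm_lt_d|d_le_mm] := ltnP (mdeg mm) d.
  have /= b1 := P_b n1 (BMultinom mm_lt_d); have /= b2 := P_b n2 (BMultinom mm_lt_d).
  have := code12 (BMultinom mm_lt_d); rewrite !ffunE => /(congr1 val) /=.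
  by rewrite !inordK; lia.
by rewrite !memN_msupp_eq0 // msize_mdeg_ge // (leq_trans (P_deg _) d_le_mm).
Qed.

(* {mpoly rat[m]} is not a countType, so rational polynomials are indexed
   by their lists of terms. *)
Definition mpoly_of_terms (R : nzRingType) n (s : seq (R * 'X_{1..n})) : {mpoly R[n]} :=
  \sum_(cm <- s) cm.1 *: 'X_[cm.2].

Lemma mpoly_of_terms_surj (R : nzRingType) n (p : {mpoly R[n]}) :
  exists s, mpoly_of_terms s = p.
Proof.
by exists [seq (p@_mm, mm) | mm <- msupp p]; rewrite /mpoly_of_terms big_map -mpolyE.
Qed.

Lemma complex_real_le_nat (R : realType) (z : R[i]) :
  z \is Num.real -> exists b : nat, z <= b%:R.
Proof.
case/complex_realP => r ->; exists (Num.Def.archi_bound `|r|).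
rewrite -(rmorph_nat (real_complex R)) lecR.
by apply: le_trans (ler_norm r) (ltW (archi_boundP _)).
Qed.

Section IntegerPolynomialSequence.
Variables (m d : nat) (P : nat -> {mpoly int[m]}).
Hypotheses (P_inj : injective P) (P_deg : forall n, (msize (P n) <= d)%nat).

Local Notation N := #|{: 'X_{1..m < d}}|.

Definition mon_of_index (k : 'I_N) : 'X_{1..m} := enum_val k.

Lemma mon_of_index_inj : injective mon_of_index.
Proof. by move=> k1 k2 /val_inj /enum_val_inj. Qed.

Definition coef_col (p : {mpoly int[m]}) : 'cV[C]_N :=
  \col_k (p@_(mon_of_index k))%:~R.

Definition monomial_row (x : 'I_m -> C) : 'rV[C]_N :=
  \row_k \prod_i x i ^+ mon_of_index k i.

Local Notation bounded_row := (bounded_along (fun n => coef_col (P n))).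

Lemma evalZ_monomial_row n x :
  evalZ (P n) x = (monomial_row x *m coef_col (P n)) 0 0.
Proof.
rewrite /evalZ (map_mpolyE _ (P_deg n)) raddf_sum !mxE /=.
rewrite (big_enum_val (fun t : 'X_{1..m < d} => _)) /=.
by apply: eq_bigr => k _; rewrite !mxE mevalZ mevalX mulrC.
Qed.

Lemma exists_unbounded_row : exists v, ~ bounded_row v.
Proof.
apply: NNPP => all_bounded; apply: bounded_mpoly_seq_not_injective P_deg _ P_inj => t.
have [B B_bound] : bounded_row (delta_mx 0 (enum_rank t)).
  by apply: NNPP => unbounded; apply: all_bounded; exists (delta_mx 0 (enum_rank t)).
have [|b B_le_b] := @complex_real_le_nat _ B.
  by apply: ger0_real; apply: le_trans (B_bound 0%nat).
exists b => n; have := le_trans (B_bound n) B_le_b.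
by rewrite -rowE !mxE /mon_of_index enum_rankK -intr_norm -natr_absz ler_nat.
Qed.

Lemma exists_annihilating_mpoly : exists2 F : {mpoly C[m]}, F != 0 &
  forall x, bounded_row (monomial_row x) -> F.@[x] = 0.
Proof.
have [v0 v0_unbounded] := exists_unbounded_row.
have [r r_neq0 r_ann] :=
  proper_subspace_annihilator (bounded_along0 _) (@bounded_alongZD _ _ _) v0_unbounded.
exists (\sum_k r k 0 *: 'X_[mon_of_index k]).
  apply: contraNneq r_neq0 => F0; apply/eqP/matrixP => k j; rewrite ord1 mxE.
  have := congr1 (mcoeff (mon_of_index k)) F0.
  rewrite mcoeff0 raddf_sum (bigD1 k) //= mcoeffZ mcoeffX eqxx mulr1 big1 ?addr0 //.
  by move=> l lk; rewrite mcoeffZ mcoeffX (inj_eq mon_of_index_inj) (negbTE lk) mulr0.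
move=> x /r_ann xr0; transitivity ((monomial_row x *m r) 0 0); last by rewrite xr0 mxE.
rewrite [RHS]mxE raddf_sum /=; apply: eq_bigr => k _.
by rewrite mevalZ mevalX !mxE mulrC.
Qed.

End IntegerPolynomialSequence.

Lemma map_mpoly_eq0 (R S : nzRingType) (f : {rmorphism R -> S}) n (p : {mpoly R[n]}) :
  injective f -> (map_mpoly f p == 0) = (p == 0).
Proof.
move=> f_inj; apply/eqP/eqP => [fp0|->]; last exact: rmorph0.
by apply/mpolyP => mm; apply: f_inj; rewrite -mcoeff_map_mpoly fp0 !mcoeff0 rmorph0.
Qed.

(* msize p = 1 + total degree of p (0 for p = 0). *)
Theorem proposition2p6 (m : nat) (P : nat -> {mpoly int[m]}) :
  injective P ->
  (exists d : nat, forall n, leq (msize (P n)) d) ->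
  exists xi : 'I_m -> C,
    alg_indep_Q xi /\
    forall M : Rdefinitions.R, exists n : nat, ((M%:C)%C : C) < (`|evalZ (P n) xi| : C).
Proof.
move=> P_inj [d P_deg].
have [F F_neq0 F_ann] := exists_annihilating_mpoly P_inj P_deg.
pose f (o : option (seq (rat * 'X_{1..m}))) : {mpoly C[m]} :=
  if o is Some s then map_mpoly (ratr : rat -> C) (mpoly_of_terms s) else F.
have [xi xi_avoids] := mpoly_avoid_zeros (@complex_avoids_sequence _) f.
exists xi; split.
  move=> p; have [s <-] := mpoly_of_terms_surj p => p_neq0.
  by apply: (xi_avoids (Some s)); rewrite /= map_mpoly_eq0 //; apply: fmorph_inj.
move=> M; apply: NNPP => bounded; move/eqP: (xi_avoids None F_neq0); apply.
apply: F_ann; exists (M%:C)%C => n; rewrite -(evalZ_monomial_row P_deg).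
rewrite real_leNgt ?normr_real //; first by apply/negP => lt; apply: bounded; exists n.
by apply/complex_realP; exists M.
Qed.
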